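(* Let $s\in[-\infty,0]$, let $\rho,\rho'$ be $2\times2$ density matrices with $\mathrm{Tr}[\rho^2]=\mathrm{Tr}[\rho'^2]$, and let $X,X'$ be nonzero $2\times 2$ Hermitian matrices with $[\rho',X']\neq 0$. Let $\{|\psi_1\rangle,|\psi_2\rangle\}$ and $\{|\psi'_1\rangle,|\psi'_2\rangle\}$ be orthonormal eigenbases of $\rho$ and $\rho'$ respectively, with eigenvalues in descending order. Then $I^s(\rho,X)=\eta\, I^s(\rho',X')$, where $\eta=\dfrac{|\langle\psi_1|X|\psi_2\rangle|^2}{|\langle\psi'_1|X'|\psi'_2\rangle|^2}$.
   Context: For a density matrix $\rho=\sum_{i}\lambda_i|\psi_i\rangle\langle\psi_i|$ on $\mathbb{C}^d$ (orthonormal eigenbasis, $\lambda_1\ge\cdots\ge\lambda_d\ge0$): for $-\infty<s<0$ and $a_1,a_2>0$ let $m_s(a_1,a_2)=\left(\frac{a_1^s+a_2^s}{2}\right)^{1/s}$; $m_0(a_1,a_2)=\sqrt{a_1a_2}$; $m_{-\infty}(a_1,a_2)=\min\{a_1,a_2\}$; and $m_s(a,0)=m_s(0,a)=m_s(0,0)=0$. Define $\zeta_\rho^s(X,Y)=\mathrm{Tr}[\rho X^\dagger Y]-\sum_{i,j} m_s(\lambda_i,\lambda_j)\langle\psi_i|X^\dagger|\psi_j\rangle\langle\psi_j|Y|\psi_i\rangle$ and $I^s(\rho,X)=\zeta_\rho^s(X,X)$. *)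

From HB Require Import structures.
From mathcomp Require Import all_boot all_order all_algebra.
From mathcomp Require Import reals constructive_ereal ereal exp.
From mathcomp Require Import complex.

Set Implicit Arguments.
Unset Strict Implicit.
Unset Printing Implicit Defensive.

Import Order.TTheory GRing.Theory Num.Theory.
Local Open Scope ring_scope.

Section QDefs.
Variable R : realType.
Local Notation C := R[i].

Definition RtoC (x : R) : C := Complex x 0.

Definition dagger m n (A : 'M[C]_(m, n)) : 'M[C]_(n, m) := map_mx Num.conj A^T.

Definition is_hermitian n (A : 'M[C]_n) : Prop := dagger A = A.

Definition density_matrix n (rho : 'M[C]_n) : Prop :=
  [/\ is_hermitian rho,
      (forall v : 'cV[C]_n, 0 <= (dagger v *m rho *m v) 0 0)
    & \tr rho = 1].

Definition braket n (u : 'cV[C]_n) (A : 'M[C]_n) (v : 'cV[C]_n) : C :=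
  (dagger u *m A *m v) 0 0.

Definition ordered_eigenbasis n (rho : 'M[C]_n) (lam : 'I_n -> R)
    (psi : 'I_n -> 'cV[C]_n) : Prop :=
  [/\ (forall i j, braket (psi i) 1%:M (psi j) = (i == j)%:R),
      (forall i, rho *m psi i = RtoC (lam i) *: psi i)
    & (forall i j : 'I_n, (i <= j)%N -> lam j <= lam i)].

Definition mean_s (s : \bar R) (a1 a2 : R) : R :=
  if (a1 == 0) || (a2 == 0) then 0 else
  match s with
  | -oo%E => Num.min a1 a2
  | (r%:E)%E => if r == 0 then Num.sqrt (a1 * a2)
                else ((a1 `^ r + a2 `^ r) / 2) `^ (r^-1)
  | +oo%E => 0 (* not used: s <= 0 *)
  end.

Definition zeta_s n (s : \bar R) (rho : 'M[C]_n) (lam : 'I_n -> R)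
    (psi : 'I_n -> 'cV[C]_n) (X Y : 'M[C]_n) : C :=
  \tr (rho *m dagger X *m Y)
  - \sum_(i < n) \sum_(j < n)
      RtoC (mean_s s (lam i) (lam j))
      * braket (psi i) (dagger X) (psi j) * braket (psi j) Y (psi i).

Definition I_s n (s : \bar R) (rho : 'M[C]_n) (lam : 'I_n -> R)
    (psi : 'I_n -> 'cV[C]_n) (X : 'M[C]_n) : C :=
  zeta_s s rho lam psi X X.

End QDefs.

From HB Require Import structures.
From mathcomp Require Import all_boot all_order all_algebra.
From mathcomp Require Import reals constructive_ereal ereal exp.
From mathcomp Require Import complex.
From mathcomp Require Import ring lra.

(* In an orthonormal eigenbasis of rho,
     I^s(rho, X) = sum_(i,j) (lam_i - m_s(lam_i, lam_j)) |<psi_i|X|psi_j>|^2,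
   and m_s(lam, lam) = lam kills the diagonal terms.  For a qubit this leaves
   (lam_1 + lam_2 - 2 m_s(lam_1, lam_2)) |<psi_1|X|psi_2>|^2.  Unit trace and
   equal purity determine the ordered spectrum, so this prefactor is the same
   for rho and rho'; and <psi_i|[rho, X]|psi_j> = (lam_i - lam_j) <psi_i|X|psi_j>
   shows that [rho', X'] <> 0 forces <psi'_1|X'|psi'_2> <> 0. *)

Set Implicit Arguments.
Unset Strict Implicit.
Unset Printing Implicit Defensive.

Import Order.TTheory GRing.Theory Num.Theory.
Local Open Scope ring_scope.

Lemma ord2_cases (i : 'I_2) : i = 0 \/ i = 1.
Proof. by case: i => [[|[|//]] ?]; [left|right]; apply: val_inj. Qed.

Lemma big_ord2 (V : nmodType) (F : 'I_2 -> V) : \sum_(i < 2) F i = F 0 + F 1.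
Proof. by rewrite big_ord_recl big_ord1; congr (_ + F _); apply: val_inj. Qed.

Lemma sorted_pair_eq_of_power_sums (F : realFieldType) (a0 a1 b0 b1 : F) :
  a1 <= a0 -> b1 <= b0 -> a0 + a1 = b0 + b1 ->
  a0 ^+ 2 + a1 ^+ 2 = b0 ^+ 2 + b1 ^+ 2 -> a0 = b0 /\ a1 = b1.
Proof.
move=> ha hb s1 s2.
have gap_sqr (x y : F) : (x - y) ^+ 2 = (x ^+ 2 + y ^+ 2) *+ 2 - (x + y) ^+ 2 by ring.
have : a0 - a1 = b0 - b1.
  by apply/eqP; rewrite -(eqrXn2 (n := 2)) ?subr_ge0 // !gap_sqr s1 s2.
by move=> d; split; lra.
Qed.

Section RealMean.
Variable R : realType.

Lemma mean_sC s (a b : R) : mean_s s a b = mean_s s b a.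
Proof.
rewrite /mean_s orbC; case: s => [r| |].
- by rewrite (mulrC a) (addrC (a `^ r)).
- by [].
- by rewrite minC.
Qed.

Lemma mean_sxx s (a : R) : (s <= 0)%E -> 0 <= a -> mean_s s a a = a.
Proof.
move=> hs ha; rewrite /mean_s orbb.
have [->|a0] := eqVneq a 0; first by [].
case: s hs => [r| |] //= _; last by rewrite minxx.
have [_|r0] := eqVneq r 0; first by rewrite -expr2 sqrtr_sqr ger0_norm.
by rewrite -mulr2n -(mulr_natr (a `^ r)) mulfK ?pnatr_eq0 // -powRrM mulfV // powRr1.
Qed.

End RealMean.

Section Adjoint.
Variable R : realType.
Local Notation C := R[i].

Lemma RtoC_real (x : R) : RtoC x \is Num.real.
Proof. by apply/complex_realP; exists x. Qed.

Lemma conj_RtoC (x : R) : (RtoC x)^* = RtoC x.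
Proof. exact/conj_Creal/RtoC_real. Qed.

Lemma RtoCE : @RtoC R =1 real_complex R.
Proof. by []. Qed.

Lemma RtoC_inj : injective (@RtoC R).
Proof. exact: complexI. Qed.

Lemma daggerM m n p (A : 'M[C]_(m, n)) (B : 'M[C]_(n, p)) :
  dagger (A *m B) = dagger B *m dagger A.
Proof. by rewrite /dagger trmx_mul map_mxM. Qed.

Lemma daggerK m n (A : 'M[C]_(m, n)) : dagger (dagger A) = A.
Proof. by apply/matrixP => i j; rewrite !mxE conjCK. Qed.

Lemma daggerZ m n a (A : 'M[C]_(m, n)) : dagger (a *: A) = a^* *: dagger A.
Proof. by apply/matrixP => i j; rewrite !mxE rmorphM. Qed.

Lemma braket_hermitian n (u v : 'cV[C]_n) A :
  is_hermitian A -> braket v A u = (braket u A v)^*.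
Proof.
move=> hA; rewrite /braket.
have -> : ((dagger u *m A *m v) 0 0)^* = dagger (dagger u *m A *m v) 0 0 by rewrite !mxE.
by rewrite !daggerM daggerK hA mulmxA.
Qed.

Lemma braketBr n (u v : 'cV[C]_n) A B : braket u (A - B) v = braket u A v - braket u B v.
Proof. by rewrite /braket mulmxBr mulmxBl !mxE. Qed.

End Adjoint.

Section OrthonormalBasis.
Variables (R : realType) (n : nat) (psi : 'I_n -> 'cV[R[i]]_n).

Definition basis_mx : 'M[R[i]]_n := \matrix_(i, j) psi j i 0.

Lemma braket_basisE A i j :
  braket (psi i) A (psi j) = (dagger basis_mx *m A *m basis_mx) i j.
Proof.
rewrite /braket !mxE; apply: eq_bigr => k _; rewrite !mxE; congr (_ * _).
by apply: eq_bigr => l _; rewrite !mxE.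
Qed.

Hypothesis psi_orthonormal : forall i j, braket (psi i) 1%:M (psi j) = (i == j)%:R.

Lemma basis_mx_isometry : dagger basis_mx *m basis_mx = 1%:M.
Proof.
by apply/matrixP => i j; rewrite -[dagger _]mulmx1 -braket_basisE psi_orthonormal mxE.
Qed.

Lemma basis_mx_unitary : basis_mx *m dagger basis_mx = 1%:M.
Proof. exact/mulmx1C/basis_mx_isometry. Qed.

Lemma braket_mulmx A B i k :
  braket (psi i) (A *m B) (psi k) =
  \sum_j braket (psi i) A (psi j) * braket (psi j) B (psi k).
Proof.
rewrite braket_basisE.
have -> : dagger basis_mx *m (A *m B) *m basis_mx =
    (dagger basis_mx *m A *m basis_mx) *m (dagger basis_mx *m B *m basis_mx).
  by rewrite !mulmxA -(mulmxA _ basis_mx) basis_mx_unitary mulmx1.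
by rewrite mxE; apply: eq_bigr => j _; rewrite !braket_basisE.
Qed.

Lemma mxtrace_braket A : \tr A = \sum_i braket (psi i) A (psi i).
Proof.
under eq_bigr do rewrite braket_basisE.
by rewrite -/(mxtrace _) mxtrace_mulC mulmxA basis_mx_unitary mul1mx.
Qed.

Lemma braket_basis_eq0 A : (forall i j, braket (psi i) A (psi j) = 0) -> A = 0.
Proof.
move=> A0; have : dagger basis_mx *m A *m basis_mx = 0.
  by apply/matrixP => i j; rewrite -braket_basisE A0 mxE.
move/(congr1 (fun M => basis_mx *m M *m dagger basis_mx)).
by rewrite !mulmxA basis_mx_unitary mul1mx -mulmxA basis_mx_unitary mulmx1 mulmx0 mul0mx.
Qed.

Variables (rho : 'M[R[i]]_n) (lam : 'I_n -> R).
Hypothesis rho_eigen : forall i, rho *m psi i = RtoC (lam i) *: psi i.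

Lemma braket_mulmx_eigenr A i j :
  braket (psi i) (A *m rho) (psi j) = RtoC (lam j) * braket (psi i) A (psi j).
Proof. by rewrite /braket -!mulmxA rho_eigen -!scalemxAr mxE. Qed.

Lemma braket_eigen i j : braket (psi i) rho (psi j) = RtoC (lam j) * (i == j)%:R.
Proof. by rewrite -[rho]mul1mx braket_mulmx_eigenr psi_orthonormal. Qed.

Lemma mxtrace_mulmx_eigen A :
  \tr (rho *m A) = \sum_i RtoC (lam i) * braket (psi i) A (psi i).
Proof.
by rewrite mxtrace_mulC mxtrace_braket; apply: eq_bigr => i _; rewrite braket_mulmx_eigenr.
Qed.

Lemma zeta_s_eigenE s X Y :
  zeta_s s rho lam psi X Y =
  \sum_i \sum_j RtoC (lam i - mean_s s (lam i) (lam j))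
                * braket (psi i) (dagger X) (psi j) * braket (psi j) Y (psi i).
Proof.
rewrite /zeta_s -mulmxA mxtrace_mulmx_eigen -sumrB; apply: eq_bigr => i _.
rewrite braket_mulmx mulr_sumr -sumrB; apply: eq_bigr => j _.
by rewrite !RtoCE rmorphB !mulrBl !mulrA.
Qed.

Lemma I_s_eigenE s X : is_hermitian X ->
  I_s s rho lam psi X =
  \sum_i \sum_j RtoC (lam i - mean_s s (lam i) (lam j))
                * `|braket (psi i) X (psi j)| ^+ 2.
Proof.
move=> hX; rewrite /I_s zeta_s_eigenE hX.
by apply: eq_bigr => i _; apply: eq_bigr => j _; rewrite -mulrA normCK -braket_hermitian.
Qed.

Hypothesis rho_hermitian : is_hermitian rho.

Lemma braket_mulmx_eigenl A i j :
  braket (psi i) (rho *m A) (psi j) = RtoC (lam i) * braket (psi i) A (psi j).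
Proof.
rewrite /braket mulmxA.
have -> : dagger (psi i) *m rho = RtoC (lam i) *: dagger (psi i).
  by rewrite -{1}rho_hermitian -daggerM rho_eigen daggerZ conj_RtoC.
by rewrite -!scalemxAl mxE.
Qed.

Lemma braket_commutator A i j :
  braket (psi i) (rho *m A - A *m rho) (psi j) =
  RtoC (lam i - lam j) * braket (psi i) A (psi j).
Proof.
by rewrite braketBr braket_mulmx_eigenl braket_mulmx_eigenr !RtoCE rmorphB mulrBl.
Qed.

End OrthonormalBasis.

Section DensityMatrix.
Variables (R : realType) (n : nat) (rho : 'M[R[i]]_n).
Variables (lam : 'I_n -> R) (psi : 'I_n -> 'cV[R[i]]_n).
Hypotheses (rho_density : density_matrix rho)
           (rho_basis : ordered_eigenbasis rho lam psi).

Lemma density_eigen_ge0 i : 0 <= lam i.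
Proof.
case: rho_density => _ rho_psd _; case: rho_basis => psi_on rho_eig _.
have : 0 <= braket (psi i) rho (psi i) := rho_psd (psi i).
by rewrite (braket_eigen psi_on rho_eig) eqxx mulr1 RtoCE ler0c.
Qed.

Lemma density_eigen_sum : \sum_i lam i = 1.
Proof.
case: rho_density => _ _ rho_tr1; case: rho_basis => psi_on rho_eig _.
apply: RtoC_inj; rewrite !RtoCE rmorph_sum rmorph1 -rho_tr1 -[rho]mulmx1.
by rewrite (mxtrace_mulmx_eigen psi_on rho_eig); apply: eq_bigr => i _; rewrite psi_on eqxx mulr1.
Qed.

Lemma mxtrace_sqr_eigen : \tr (rho *m rho) = RtoC (\sum_i lam i ^+ 2).
Proof.
case: rho_basis => psi_on rho_eig _.
rewrite (mxtrace_mulmx_eigen psi_on rho_eig) RtoCE rmorph_sum.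
by apply: eq_bigr => i _; rewrite (braket_eigen psi_on rho_eig) eqxx mulr1 rmorphXn expr2.
Qed.

End DensityMatrix.

Section Qubit.
Variables (R : realType) (rho : 'M[R[i]]_2).
Variables (lam : 'I_2 -> R) (psi : 'I_2 -> 'cV[R[i]]_2).
Hypotheses (rho_density : density_matrix rho)
           (rho_basis : ordered_eigenbasis rho lam psi).

Lemma I_s_qubitE s X : (s <= 0)%E -> is_hermitian X ->
  I_s s rho lam psi X =
  RtoC (lam 0 + lam 1 - mean_s s (lam 0) (lam 1) *+ 2)
  * `|braket (psi 0) X (psi 1)| ^+ 2.
Proof.
case: rho_basis => psi_on rho_eig _ hs hX.
rewrite (I_s_eigenE psi_on rho_eig s hX) !big_ord2.
rewrite !mean_sxx ?(density_eigen_ge0 rho_density rho_basis) // !subrr.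
rewrite (mean_sC s (lam 1)) (braket_hermitian (psi 0) (psi 1) hX) norm_conjC.
rewrite !RtoCE !rmorphB rmorphD rmorphMn rmorph0 /=.
ring.
Qed.

Lemma qubit_commutator_eq0 X : is_hermitian X ->
  braket (psi 0) X (psi 1) = 0 -> rho *m X - X *m rho = 0.
Proof.
case: rho_density => rho_herm _ _; case: rho_basis => psi_on rho_eig _ hX X01.
have X10 : braket (psi 1) X (psi 0) = 0.
  by rewrite (braket_hermitian _ _ hX) X01 conjC0.
apply: (braket_basis_eq0 psi_on) => i j; rewrite (braket_commutator rho_eig rho_herm).
by case: (ord2_cases i) (ord2_cases j) => -> [] ->;
  rewrite ?X01 ?X10 ?mulr0 // subrr RtoCE rmorph0 mul0r.
Qed.

End Qubit.

Lemma qubit_spectrum_eq (R : realType) (rho rho' : 'M[R[i]]_2)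
    (lam lam' : 'I_2 -> R) (psi psi' : 'I_2 -> 'cV[R[i]]_2) :
  density_matrix rho -> density_matrix rho' ->
  \tr (rho *m rho) = \tr (rho' *m rho') ->
  ordered_eigenbasis rho lam psi -> ordered_eigenbasis rho' lam' psi' ->
  lam =1 lam'.
Proof.
move=> Hd Hd' purity He He'.
have := density_eigen_sum Hd He; have := density_eigen_sum Hd' He'.
have := mxtrace_sqr_eigen He; have := mxtrace_sqr_eigen He'.
rewrite !big_ord2 => sq' sq sum' sum.
have [e0 e1] : lam 0 = lam' 0 /\ lam 1 = lam' 1.
  apply: sorted_pair_eq_of_power_sums.
  - by case: He => _ _ /(_ 0 1 isT).
  - by case: He' => _ _ /(_ 0 1 isT).
  - by rewrite sum sum'.
  - by apply: RtoC_inj; rewrite -sq -sq'.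
by move=> i; case: (ord2_cases i) => ->.
Qed.

Theorem theorem3 (R : realType) (s : \bar R)
    (rho rho' X X' : 'M[R[i]]_2)
    (lam lam' : 'I_2 -> R) (psi psi' : 'I_2 -> 'cV[R[i]]_2) :
  (s <= 0)%E ->
  density_matrix rho -> density_matrix rho' ->
  \tr (rho *m rho) = \tr (rho' *m rho') ->
  is_hermitian X -> is_hermitian X' -> X != 0 -> X' != 0 ->
  rho' *m X' - X' *m rho' != 0 ->
  ordered_eigenbasis rho lam psi -> ordered_eigenbasis rho' lam' psi' ->
  I_s s rho lam psi X =
    (`|braket (psi 0) X (psi 1)| ^+ 2 / `|braket (psi' 0) X' (psi' 1)| ^+ 2)
    * I_s s rho' lam' psi' X'.
Proof.
move=> hs Hd Hd' purity hX hX' _ _ comm_neq0 He He'.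
rewrite (I_s_qubitE Hd He hs hX) (I_s_qubitE Hd' He' hs hX').
rewrite !(qubit_spectrum_eq Hd Hd' purity He He').
have X'01_neq0 : `|braket (psi' 0) X' (psi' 1)| ^+ 2 != 0.
  rewrite sqrf_eq0 normr_eq0; apply: contra_neq comm_neq0.
  exact: (qubit_commutator_eq0 Hd' He' hX').
by rewrite [RHS]mulrCA divfK.
Qed.
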